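(* Let $m$ be a positive integer and let $D,D'$ be abstract storage devices with $|\mathcal{S}_D|=|\mathcal{S}_{D'}|=m$ and $D\le D'$. Then $i(D)\ge i(D')$.
   Context: An abstract storage device (ASD) is a pair $D=(\mathcal{S}_D,\mathcal{P}_D)$, $\mathcal{S}_D$ a finite set and $\mathcal{P}_D$ a finite family of partitions of $\mathcal{S}_D$. For a partition $\pi$ of $\mathcal{S}'$ and $\phi:\mathcal{S}\to\mathcal{S}'$, $\pi\circ\phi$ is the partition of $\mathcal{S}$ with $x,y$ in the same block iff $\phi(x),\phi(y)$ are in the same block of $\pi$; $\pi\preceq\rho$ means every block of $\pi$ lies in a block of $\rho$; $\wedge$ is the meet of partitions. $D\le D'$ means there exist $\phi:\mathcal{S}_D\to\mathcal{S}_{D'}$, $\alpha:\mathcal{P}_D\to\mathcal{P}_{D'}$ with $\alpha(\pi)\circ\phi\preceq\pi$ for all $\pi\in\mathcal{P}_D$. $D$ is perfect if $\mathrm{id}_{\mathcal{S}_D}=\{\{s\}:s\in\mathcal{S}_D\}\in\mathcal{P}_D$. $D^{(k)}$ has state space $\mathcal{S}_D$ and partition set $\{\pi_1\wedge\cdots\wedge\pi_k:\pi_i\in\mathcal{P}_D\}$. The perfectness index $i(D)$ is the least integer $k\ge1$ with $D^{(k)}$ perfect, and $i(D)=\infty$ if none exists. *)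

From mathcomp Require Import all_boot.
Set Implicit Arguments. Unset Strict Implicit. Unset Printing Implicit Defensive.

Record ASD := MkASD {
  st : finType;
  parts : {set {set {set st}}};
  parts_ok : forall pi, pi \in parts -> partition pi [set: st]
}.

(* pi o phi : x,y in the same block iff phi x, phi y in the same block of pi;
   its blocks are the nonempty preimages of blocks of pi. *)
Definition pullback (S S' : finType) (pi : {set {set S'}}) (phi : S -> S')
  : {set {set S}} := [set phi @^-1: B | B : {set S'} in pi] :\ set0.

Definition refines (S : finType) (pi rho : {set {set S}}) : Prop :=
  forall B, B \in pi -> exists2 C, C \in rho & B \subset C.

Definition pmeet (S : finType) (pi rho : {set {set S}}) : {set {set S}} :=
  [set A :&: B | A : {set S} in pi, B : {set S} in rho] :\ set0.

Definition asd_le (D D' : ASD) : Prop :=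
  exists (phi : st D -> st D') (alpha : {set {set st D}} -> {set {set st D'}}),
    forall pi, pi \in parts D ->
      alpha pi \in parts D' /\ refines (pullback (alpha pi) phi) pi.

Fixpoint meets_k (S : finType) (P : {set {set {set S}}}) (k : nat)
  : {set {set {set S}}} :=
  match k with
  | 0 => set0 (* unused: k >= 1 throughout *)
  | 1 => P
  | k'.+1 => [set pmeet pi rho | pi in meets_k P k', rho in P]
  end.

Definition perfect_k (D : ASD) (k : nat) : Prop :=
  [set [set x] | x : st D] \in meets_k (parts D) k.

(* perf_index D i : i(D) = i, where None encodes infinity. *)
Definition perf_index (D : ASD) (i : option nat) : Prop :=
  match i with
  | Some k => 0 < k /\ perfect_k D k /\ (forall j, 0 < j -> j < k -> ~ perfect_k D j)
  | None => forall k, 0 < k -> ~ perfect_k D k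
  end.

Definition le_ext (a b : option nat) : Prop :=
  match a, b with
  | _, None => True
  | None, Some _ => False
  | Some x, Some y => x <= y
  end.

From mathcomp Require Import all_boot.

Set Implicit Arguments.
Unset Strict Implicit.
Unset Printing Implicit Defensive.

(* If (phi, alpha) witnesses D <= D', then by induction on k every k-fold meet
   of partitions of D is refined by the pullback along phi of a k-fold meet of
   partitions of D'.  When the discrete partition of S_D is a k-fold meet, the
   corresponding meet Q' of D' has a discrete pullback; this forces phi to be
   injective, hence bijective since |S_D| = |S_D'|, and then Q' itself is
   discrete.  So D^(k) perfect implies D'^(k) perfect, whence i(D') <= i(D). *)

Definition discrete (T : finType) : {set {set T}} := [set [set x] | x : T].

Section Pullback.

Variables (T T' : finType) (phi : T -> T').

Lemma pullback_block (Q : {set {set T'}}) B :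
  B \in Q -> phi @^-1: B != set0 -> phi @^-1: B \in pullback Q phi.
Proof. by move=> QB nB; rewrite !inE nB; apply/imsetP; exists B. Qed.

Lemma refines_pullback_block {Q : {set {set T'}}} {P : {set {set T}}} {B} :
  refines (pullback Q phi) P -> B \in Q -> phi @^-1: B != set0 ->
  exists2 C, C \in P & phi @^-1: B \subset C.
Proof. by move=> rQP QB nB; apply: rQP; apply: pullback_block. Qed.

Lemma refines_pullback_pmeet (A B : {set {set T}}) (A' B' : {set {set T'}}) :
  refines (pullback A' phi) A -> refines (pullback B' phi) B ->
  refines (pullback (pmeet A' B') phi) (pmeet A B).
Proof.
move=> rA rB X; rewrite !inE => /andP[nX /imsetP[Y]].
rewrite !inE => /andP[_ /imset2P[A1 B1 A'A1 B'B1 ->]] EX; subst X.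
rewrite preimsetI in nX *.
have nA1 : phi @^-1: A1 != set0 by apply: contraNneq nX => ->; rewrite set0I.
have nB1 : phi @^-1: B1 != set0 by apply: contraNneq nX => ->; rewrite setI0.
have [C1 AC1 sC1] := refines_pullback_block rA A'A1 nA1.
have [C2 BC2 sC2] := refines_pullback_block rB B'B1 nB1.
have sC : phi @^-1: A1 :&: phi @^-1: B1 \subset C1 :&: C2 by apply: setISS.
exists (C1 :&: C2) => //; rewrite !inE; apply/andP; split.
  by apply: contraNneq nX => C0; rewrite -subset0 -C0.
by apply/imset2P; exists C1 C2.
Qed.

End Pullback.

Lemma pmeet_partition (T : finType) (A B : {set {set T}}) (D : {set T}) :
  partition A D -> partition B D -> partition (pmeet A B) D.
Proof.
move=> /and3P[/eqP cA tA nA] /and3P[/eqP cB tB nB].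
have block_mem x : x \in D -> pblock A x :&: pblock B x \in pmeet A B.
  move=> Dx; have xA : x \in cover A by rewrite cA.
  have xB : x \in cover B by rewrite cB.
  rewrite !inE; apply/andP; split.
    by apply/set0Pn; exists x; rewrite inE !mem_pblock xA xB.
  by apply/imset2P; exists (pblock A x) (pblock B x); rewrite ?pblock_mem.
apply/and3P; split.
- apply/eqP/setP => x; apply/bigcupP/idP => [[X] | Dx].
    rewrite !inE => /andP[_ /imset2P[A1 B1 AA1 _ ->]] /setIP[xA1 _].
    by rewrite -cA; apply/bigcupP; exists A1.
  exists (pblock A x :&: pblock B x); first exact: block_mem.
  by rewrite inE !mem_pblock cA cB Dx.
- apply/trivIsetP => X Y; rewrite !inE => /andP[_ /imset2P[A1 B1 AA1 BB1 ->]].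
  move=> /andP[_ /imset2P[A2 B2 AA2 BB2 ->]] neq.
  apply/pred0P => x /=; apply/negbTE/negP; rewrite !inE => /andP[].
  move=> /andP[x1 y1] /andP[x2 y2]; move/negP: neq; apply; apply/eqP.
  by rewrite -(def_pblock tA AA1 x1) -(def_pblock tA AA2 x2)
             -(def_pblock tB BB1 y1) -(def_pblock tB BB2 y2).
- by rewrite !inE eqxx.
Qed.

Lemma meets_k_partition (T : finType) (P : {set {set {set T}}}) k Q :
  (forall pi, pi \in P -> partition pi [set: T]) ->
  Q \in meets_k P k -> partition Q [set: T].
Proof.
move=> partP; elim: k Q => [|[|k] IHk] Q //=; first by rewrite inE.
  exact: partP.
by case/imset2P=> pi rho Hpi Hrho ->; apply: pmeet_partition; auto.
Qed.

Lemma meets_k_refines (D D' : ASD) (phi : st D -> st D')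
    (alpha : {set {set st D}} -> {set {set st D'}}) k Q :
  (forall pi, pi \in parts D ->
     alpha pi \in parts D' /\ refines (pullback (alpha pi) phi) pi) ->
  Q \in meets_k (parts D) k ->
  exists2 Q', Q' \in meets_k (parts D') k & refines (pullback Q' phi) Q.
Proof.
move=> le_alpha; elim: k Q => [|[|k] IHk] Q //=; first by rewrite inE.
  by case/le_alpha=> ??; exists (alpha Q).
case/imset2P=> pi rho Hpi Hrho ->.
have [Q1 HQ1 rQ1] := IHk _ Hpi.
have [alpha_rho r_rho] := le_alpha _ Hrho.
exists (pmeet Q1 (alpha rho)); first by apply/imset2P; exists Q1 (alpha rho).
exact: refines_pullback_pmeet.
Qed.

Lemma partition_singletons (T : finType) (Q : {set {set T}}) :
  partition Q [set: T] -> {in Q, forall B, exists y, B = [set y]} ->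
  Q = discrete T.
Proof.
move=> /and3P[/eqP covQ _ _] single; apply/setP => B.
apply/idP/imsetP => [/single[y ->] | [y _ ->]]; first by exists y.
have yQ : y \in cover Q by rewrite covQ.
have [z Ez] := single _ (pblock_mem yQ).
have : y \in pblock Q y by rewrite mem_pblock.
by rewrite Ez inE => /eqP->; rewrite -Ez pblock_mem.
Qed.

Section DiscretePullback.

Variables (T T' : finType) (phi : T -> T') (Q : {set {set T'}}).
Hypotheses (partQ : partition Q [set: T'])
           (discrQ : refines (pullback Q phi) (discrete T)).

Lemma discrete_pullback_sub1 B x :
  B \in Q -> x \in phi @^-1: B -> phi @^-1: B \subset [set x].
Proof.
move=> QB xB; have nB : phi @^-1: B != set0 by apply/set0Pn; exists x.
have [_ /imsetP[z _ ->] sB] := refines_pullback_block discrQ QB nB.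
by move: (subsetP sB x xB); rewrite inE => /eqP->.
Qed.

Lemma discrete_pullback_inj : injective phi.
Proof.
move: partQ => /and3P[/eqP covQ tQ _] x x' eq_phi.
have xQ : phi x \in cover Q by rewrite covQ.
have x'B : x' \in phi @^-1: pblock Q (phi x) by rewrite inE -eq_phi mem_pblock.
have := subsetP (discrete_pullback_sub1 (pblock_mem xQ) x'B) x.
by rewrite !inE mem_pblock xQ => /(_ isT) /eqP.
Qed.

Hypothesis cardT : #|T| = #|T'|.

Lemma discrete_pullback_eq : Q = discrete T'.
Proof.
have onto y : y \in codom phi.
  exact: inj_card_onto discrete_pullback_inj (eq_leq (esym cardT)) y.
apply: partition_singletons => // B QB.
have /set0Pn[y By] : B != set0 by apply: contraTneq QB => ->; case/and3P: partQ.
exists y; apply/setP => w; rewrite inE; apply/idP/eqP => [Bw | ->//].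
have /codomP[x Ey] := onto y; have /codomP[x' Ex'] := onto w; subst y.
have x'B : x' \in phi @^-1: B by rewrite inE -Ex'.
have := subsetP (discrete_pullback_sub1 QB x'B) x.
by rewrite !inE => /(_ By) /eqP->.
Qed.

End DiscretePullback.

Lemma perfect_k_le (D D' : ASD) k :
  #|st D| = #|st D'| -> asd_le D D' -> perfect_k D k -> perfect_k D' k.
Proof.
move=> cardD [phi [alpha le_alpha]] /(meets_k_refines le_alpha)[Q' HQ' rQ'].
have partQ' := meets_k_partition (@parts_ok D') HQ'.
change (discrete (st D') \in meets_k (parts D') k).
by rewrite -(discrete_pullback_eq partQ' rQ' cardD).
Qed.

Theorem proposition4 (m : nat) (D D' : ASD) (iD iD' : option nat) :
  0 < m -> #|st D| = m -> #|st D'| = m -> asd_le D D' ->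
  perf_index D iD -> perf_index D' iD' ->
  le_ext iD' iD.
Proof.
move=> _ cardD cardD' le_DD'.
case: iD => [k|]; last by case: iD'.
move=> [k_gt0 [perfD _]].
have perfD' := perfect_k_le (etrans cardD (esym cardD')) le_DD' perfD.
case: iD' => [k'|] /=; last by move=> /(_ k k_gt0).
move=> [_ [_ minimal]]; rewrite leqNgt; apply/negP => lt_kk'.
exact: minimal k k_gt0 lt_kk' perfD'.
Qed.
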